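(* For all $c\in\mathbb{N}^+$ with $c>1$, as $n\to\infty$, $$\sup\left\{\frac{|f|_{\mathcal{C}}}{|f|_{\mathcal{U}^c}}: f\in H^n,\ |f|_{\mathcal{U}^c}<+\infty\right\}\in\Omega(n\log n).$$
   Context: Let $\mathcal{B}=\{0,1\}$, let $\mathcal{B}^*$ be the set of finite binary strings and $|h|$ the length of $h\in\mathcal{B}^*$. For $n\in\mathbb{N}^+$, $H^n$ is the set of all functions $\mathcal{B}^n\to\mathcal{B}$. An interpreter is a Turing machine computing a partial function $\varphi:\mathcal{B}^*\times\mathcal{B}^*\to\mathcal{B}\cup\{\bot\}$, where $\bot$ denotes non-halting (or invalid) output. For $f\in H^n$, $|f|_\varphi=\min\{|h|:\varphi(h,x)=f(x)\ \forall x\in\mathcal{B}^n\}$ ($+\infty$ if no such $h$). Turing machines have alphabet $\{0,1,b\}$ ($b$ blank), a finite state set containing an initial state and two final states accept/reject; the output is $1$ if halting in accept, $0$ if halting in reject, $\bot$ otherwise; multi-tape machines have read-only input tapes and read/write work tapes, and the transition function is a finite list of rules. $E(T)$ is a fixed prefix-free binary encoding of a machine $T$ listing its rules (of length at least 2 for every machine). For $c\in\mathbb{N}^+$, $\mathcal{U}^c$ is a time-bounded universal interpreter (a 2-input-tape, 3-work-tape machine): on $(p,x)$ with $n=|x|$, it checks within $n^c$ steps whether $p=E(T)u$ for a two-input-tape machine $T$ and $u\in\mathcal{B}^*$ (outputting $\bot$ if not, or if the check does not finish), then simulates $T$ on $(u,x)$ with an efficient universal simulation (Hennie–Stearns, overhead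 $O(t\log t)$ for $t$ simulated steps), devoting at most $n^c$ of its own steps to the simulation; it outputs $T$'s output if $T$ halts within this budget and $0$ otherwise. For fixed $p$ it runs in at most $\beta n^c$ steps for a constant $\beta$. In particular, if a Turing machine computes $g:\mathcal{B}^*\to\mathcal{B}$ in time $O(n^{c'})$ with $c'<c$, there is $h\in\mathcal{B}^*$ with $\mathcal{U}^c(h,x)=g(x)$ for all $x$ of sufficiently large length. A Boolean circuit on $n$ inputs is a DAG with a unique sink (output) whose sources are labelled by input indices in $\{1,\dots,n\}$ and whose other vertices (gates) are labelled AND, OR (two incoming edges) or NOT (one incoming edge); its size $|C|$ is its number of vertices. The circuit interpreter $\mathcal{C}$ reads a program $h=0^{\lceil\log_2 n\rceil}1\,[\text{binary expansion of } n]\,0^{|C|}1\,[\text{description of vertex } i]_{i=1}^{|C|}$, each vertex being described by its label and its parents/input index using $\max\{2\lceil\log_2|C|\rceil,\lceil\log_2 n\rceil\}$ bits beyond the label bits, so a circuit $C$ on $n$ inputs has encoding length $L(|C|,n)=2\lceil\log_2 n\rceil+2+|C|(3+\max\{2\lceil\log_2|C|\rceil,\lceil\log_2 n\rceil\})$; $\mathcal{C}(h,x)$ is the circuit's output on $x\in\mathcal{B}^n$, and $\bot$ if $h$ is malformed. Hence $|f|_{\mathcal{C}}=\min\{L(|C|,n): C \text{ computes } f\}$. *)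

From mathcomp Require Import all_boot.
From mathcomp Require Import boolp.

Set Implicit Arguments.
Unset Strict Implicit.
Unset Printing Implicit Defensive.

(* Classical minimum of a set of naturals: None = +infinity (empty).   *)
Lemma ex_asbool (P : nat -> Prop) : (exists k, P k) -> exists k, `[< P k >].
Proof. by case=> k Pk; exists k; apply/asboolP. Qed.

Definition minopt (P : nat -> Prop) : option nat :=
  match pselect (exists k, P k) with
  | left e => Some (ex_minn (ex_asbool e))
  | right _ => None
  end.

Definition interpreter := seq bool -> seq bool -> option bool.

Definition H (n : nat) := {ffun n.-tuple bool -> bool}.

Definition desc_compl (phi : interpreter) (n : nat) (f : H n) : option nat :=
  minopt (fun k => exists h : seq bool,
            size h = k /\ forall x : n.-tuple bool, phi h (tval x) = Some (f x)).

(* States are 0..nstates-1; 0 = initial, 1 = accept, 2 = reject.       *)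
Inductive sym := S0 | S1 | Sb.
Inductive move := ML | MR | MS.

Definition sym_of_bool (b : bool) := if b then S1 else S0.

Record TM := {
  tm_k : nat;                (* number of work tapes *)
  tm_nstates : nat;
  (* transition (finite list of rules seen as a partial function):
     state, input symbol, work-tape symbols  ->
     new state, input head move, (symbol written, move) per work tape *)
  tm_delta : nat -> sym -> seq sym -> option (nat * move * seq (sym * move))
}.

Definition TM_wf (M : TM) : Prop :=
  3 <= tm_nstates M /\
  forall q a ws q' mi wm, tm_delta M q a ws = Some (q', mi, wm) ->
    q' < tm_nstates M /\ size wm = tm_k M.

(* a two-way infinite work tape: (reversed left part, head symbol, right part) *)
Definition tape := (seq sym * sym * seq sym)%type.

Definition tape_move (t : tape) (m : move) : tape :=
  let: (l, a, r) := t in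
  match m with
  | MS => t
  | ML => match l with [::] => ([::], Sb, a :: r) | b :: l' => (l', b, a :: r) end
  | MR => match r with [::] => (a :: l, Sb, [::]) | b :: r' => (a :: l, b, r') end
  end.

Definition tape_write (t : tape) (s : sym) : tape :=
  let: (l, _, r) := t in (l, s, r).

Definition tape_head (t : tape) : sym := let: (_, a, _) := t in a.

(* configuration: state, input head position, work tapes *)
Definition config := (nat * nat * seq tape)%type.

Definition init_config (M : TM) : config := (0, 0, nseq (tm_k M) ([::], Sb, [::])).

(* input tape: x followed by blanks; the head cannot move left of cell 0 *)
Definition input_sym (x : seq bool) (pos : nat) : sym :=
  nth Sb (map sym_of_bool x) pos.

Definition move_input (pos : nat) (m : move) : nat :=
  match m with ML => pos.-1 | MR => pos.+1 | MS => pos end.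

(* one step; halted configurations (state 1 or 2) and configurations with
   no applicable rule are left unchanged (the latter never halt) *)
Definition step (M : TM) (x : seq bool) (cf : config) : config :=
  let: (q, pos, ts) := cf in
  if (q == 1) || (q == 2) then cf else
  match tm_delta M q (input_sym x pos) (map tape_head ts) with
  | None => cf
  | Some (q', mi, wm) =>
      (q', move_input pos mi,
       [seq tape_move (tape_write tw.1 tw.2.1) tw.2.2 | tw <- zip ts wm])
  end.

Definition run (M : TM) (x : seq bool) (t : nat) : config :=
  iter t (step M x) (init_config M).

Definition state_of (cf : config) : nat := let: (q, _, _) := cf in q.

Definition computes_in_time (M : TM) (g : seq bool -> bool) (T : nat -> nat) : Prop :=
  forall x : seq bool, exists t, t <= T (size x) /\
    state_of (run M x t) = (if g x then 1 else 2).

(* The (only) property of the time-bounded universal interpreter U^c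
   used in the context: every g computable in time O(n^c') with c' < c
   is computed by U^c with a fixed program on all inputs of large length. *)
Definition universal_property (c : nat) (U : interpreter) : Prop :=
  forall (c' : nat), c' < c ->
  forall (M : TM) (g : seq bool -> bool), TM_wf M ->
    (exists C : nat, computes_in_time M g (fun n => C * n ^ c' + C)) ->
    exists (h : seq bool) (N : nat), forall x : seq bool, N <= size x -> U h x = Some (g x).

(* Vertices listed in a topological order; parents are referred to by
   their (0-based) position in the list; input indices are 0-based
   (index j stands for the paper's input j+1).  The sink is the last
   vertex. *)
Inductive vertex := VIn of nat | VAnd of nat & nat | VOr of nat & nat | VNot of nat.

Definition parents (v : vertex) : seq nat :=
  match v with
  | VIn _ => [::]
  | VAnd a b => [:: a; b]
  | VOr a b => [:: a; b]
  | VNot a => [:: a]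
  end.

Definition circuit := seq vertex.

Definition wf_circuit (n : nat) (C : circuit) : Prop :=
  0 < size C /\
  (forall i, i < size C ->
     match nth (VIn 0) C i with
     | VIn j => j < n
     | v => all (fun a => a < i) (parents v)
     end) /\
  (* unique sink: every vertex other than the output has a child *)
  (forall i, i < (size C).-1 ->
     exists j, j < size C /\ i \in parents (nth (VIn 0) C j)).

Definition eval_vertex (x : seq bool) (vals : seq bool) (v : vertex) : bool :=
  match v with
  | VIn j => nth false x j
  | VAnd a b => nth false vals a && nth false vals b
  | VOr a b => nth false vals a || nth false vals b
  | VNot a => ~~ nth false vals a
  end.

Definition eval_circuit (C : circuit) (x : seq bool) : bool :=
  last false (foldl (fun vals v => rcons vals (eval_vertex x vals v)) [::] C).

Definition circuit_computes (n : nat) (C : circuit) (f : H n) : Prop :=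
  forall x : n.-tuple bool, eval_circuit C (tval x) = f x.

Definition clog2 (m : nat) : nat := up_log 2 m.

(* L(|C|, n): length of the encoding of a circuit of size s on n inputs *)
Definition Lenc (s n : nat) : nat :=
  2 * clog2 n + 2 + s * (3 + maxn (2 * clog2 s) (clog2 n)).

Definition circ_compl (n : nat) (f : H n) : option nat :=
  minopt (fun k => exists C : circuit,
            wf_circuit n C /\ circuit_computes C f /\ k = Lenc (size C) n).

From mathcomp Require Import all_boot.
From mathcomp Require Import boolp zify.

(* The ratio |f|_C / |f|_{U^c} is already of order n log n for the
   conjunction AND_n(x) = x_1 /\ ... /\ x_n:
   - AND is decided by a one-state machine scanning the input once, i.e.
     in linear time; since c > 1, universality of U^c yields a single
     program h computing AND on all long inputs, so |AND_n|_{U^c} <= |h|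
     is bounded by a constant;
   - AND_n depends on each of its n inputs, and a circuit can only depend
     on inputs that label one of its sources, so every circuit for AND_n
     has at least n vertices; each vertex description takes at least
     ceil(log2 n) bits, whence |AND_n|_C >= n log2 n;
   - AND_n does have a circuit (a chain of AND gates), so |AND_n|_C is
     finite and the ratio is at least (n log2 n) / |h|. *)

Lemma minoptP (P : nat -> Prop) : (exists k, P k) ->
  exists m, minopt P = Some m /\ P m /\ forall k, P k -> m <= k.
Proof.
move=> ex; rewrite /minopt; case: pselect => [e|//].
case: ex_minnP => m /asboolP Pm m_min; exists m; split=> //; split=> //.
by move=> k Pk; apply: m_min; apply/asboolP.
Qed.

Lemma desc_compl_le (phi : interpreter) n (f : H n) (h : seq bool) :
  (forall x : n.-tuple bool, phi h (tval x) = Some (f x)) ->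
  exists u, desc_compl phi f = Some u /\ u <= size h.
Proof.
move=> hf; rewrite /desc_compl.
have [|u [-> [_ u_min]]] := @minoptP (fun k => exists h' : seq bool,
    size h' = k /\ forall x : n.-tuple bool, phi h' (tval x) = Some (f x)).
  by exists (size h), h.
by exists u; split=> //; apply: u_min; exists h.
Qed.

Lemma circ_compl_attained n (f : H n) (C : circuit) :
  wf_circuit n C -> circuit_computes C f ->
  exists k (C' : circuit), circ_compl f = Some k /\
    circuit_computes C' f /\ k = Lenc (size C') n.
Proof.
move=> wfC CfC; rewrite /circ_compl.
have [|k [-> [[C' [_ [C'f ->]]] _]]] := @minoptP (fun k => exists C' : circuit,
    wf_circuit n C' /\ circuit_computes C' f /\ k = Lenc (size C') n).
  by exists (Lenc (size C) n), C.
by exists (Lenc (size C') n), C'.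
Qed.

(* Each of s >= n vertices costs at least ceil(log2 n) >= floor(log2 n) bits. *)
Lemma Lenc_lower n s : n <= s -> n * trunc_log 2 n <= Lenc s n.
Proof.
move=> ns; have trunc_le_clog : trunc_log 2 n <= clog2 n.
  case: n {ns} => [|n]; first by rewrite /trunc_log.
  by rewrite -(@leq_exp2l 2) //; apply: leq_trans (trunc_logP _ _) (up_logP _ _).
rewrite /Lenc; apply: leq_trans (leq_addl _ _); apply: leq_mul => //.
by apply: leq_trans trunc_le_clog _; apply: leq_trans (leq_maxr _ _) _; apply: leq_addl.
Qed.

Definition and_fun (n : nat) : H n := [ffun x : n.-tuple bool => all id (tval x)].

Definition and_delta (q : nat) (a : sym) (ws : seq sym) :
  option (nat * move * seq (sym * move)) :=
  if q == 0 then match a with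
    | S1 => Some (0, MR, [::])
    | S0 => Some (2, MS, [::])
    | Sb => Some (1, MS, [::]) end
  else None.

Definition and_TM : TM := {| tm_k := 0; tm_nstates := 3; tm_delta := and_delta |}.

Lemma and_TM_wf : TM_wf and_TM.
Proof.
split=> // q a ws q' mi wm; rewrite /= /and_delta.
by case: (q == 0) => //; case: a => -[<- _ <-].
Qed.

Lemma and_TM_scan (x : seq bool) i : i <= find negb x ->
  run and_TM x i = (0, i, [::]).
Proof.
elim: i => [|i IH] le_i //.
rewrite /run iterS -/(run and_TM x i) IH ?(ltnW le_i) //= /input_sym.
have i_lt : i < size x by apply: leq_trans le_i (find_size _ _).
rewrite (nth_map false) //.
by have := before_find false le_i; case: (nth false x i).
Qed.

(* After the scan the head sees the first 0 (reject) or a blank (accept). *)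
Lemma and_TM_computes :
  computes_in_time and_TM (fun x => all id x) (fun n => 1 * n ^ 1 + 1).
Proof.
move=> x; exists (find negb x).+1; split.
  by rewrite mul1n expn1 addn1 ltnS find_size.
rewrite /run iterS -/(run and_TM x _) and_TM_scan //= /input_sym.
have all_has : all id x = ~~ has negb x by rewrite -all_predC; apply: eq_all => b; case: b.
case: (ltnP (find negb x) (size x)) => found.
- have has_x : has negb x by rewrite has_find.
  rewrite (nth_map false) //; have := nth_find false has_x.
  by case: nth => //; rewrite all_has has_x.
- have has_x : ~~ has negb x by rewrite has_find -leqNgt.
  have -> : find negb x = size x by apply/eqP; rewrite eqn_leq find_size.
  by rewrite nth_default ?size_map // all_has has_x.
Qed.

Definition input_of (v : vertex) : option nat := if v is VIn j then Some j else None.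

Lemma eval_indep (x x' : seq bool) j (C : circuit) vals :
  (forall i, i != j -> nth false x i = nth false x' i) ->
  Some j \notin map input_of C ->
  foldl (fun vals v => rcons vals (eval_vertex x vals v)) vals C =
  foldl (fun vals v => rcons vals (eval_vertex x' vals v)) vals C.
Proof.
move=> xx'; elim: C vals => [|v C IH] vals //=; rewrite inE negb_or => /andP[vj Cj].
rewrite IH //; congr (foldl _ (rcons _ _) _).
by case: v vj => //= i ij; apply: xx'; rewrite eq_sym; apply: contra ij => /eqP->.
Qed.

(* AND_n depends on every input, so each index j < n labels some source. *)
Lemma and_circuit_size n (C : circuit) : circuit_computes C (and_fun n) -> n <= size C.
Proof.
move=> CfC.
have reads_all : {subset map Some (iota 0 n) <= map input_of C}.
  move=> oj /mapP[j]; rewrite mem_iota add0n => j_lt ->{oj}.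
  apply/negPn/negP => Cj.
  pose ones := [tuple of nseq n true].
  pose flip := [tuple of map (fun i => i != j) (iota_tuple n 0)].
  have and_ones : and_fun n ones by rewrite ffunE /= all_nseq orbT.
  have and_flip : and_fun n flip = false.
    rewrite ffunE; apply/negbTE/allPn; exists false => //.
    by apply/mapP; exists j; rewrite ?mem_iota ?eqxx.
  move: and_ones; rewrite -CfC /eval_circuit (@eval_indep _ (tval flip) j) //.
    by rewrite -/(eval_circuit _ _) CfC and_flip.
  move=> i ij /=; rewrite nth_nseq; case: (ltnP i n) => i_n.
    by rewrite (nth_map 0) ?size_iota // nth_iota // add0n ij.
  by rewrite nth_default // size_map size_iota.
have := uniq_leq_size (etrans (map_inj_uniq (@Some_inj _) _) (iota_uniq 0 n)) reads_all.
by rewrite !size_map size_iota.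
Qed.

(* The chain circuit for x_0 /\ ... /\ x_m: vertex 0 reads x_0, odd vertex
   2i-1 reads x_i, and even vertex 2i conjoins vertices 2i-2 and 2i-1. *)
Definition chain_vertex (i : nat) : vertex :=
  if i == 0 then VIn 0 else if odd i then VIn (i./2).+1 else VAnd (i - 2) (i - 1).

Definition chain (m : nat) : circuit := mkseq chain_vertex m.*2.+1.

Lemma chain_eval (x : seq bool) m
    (vals := foldl (fun vals v => rcons vals (eval_vertex x vals v)) [::] (chain m)) :
  size vals = m.*2.+1 /\ last false vals = all (nth false x) (iota 0 m.+1).
Proof.
rewrite {}/vals; elim: m => [|m IH]; first by rewrite /= andbT.
move: IH; set F := (fun vals v => _) => -[IH1 IH2].
have -> : chain m.+1 = chain m ++ [:: VIn m.+1; VAnd m.*2 m.*2.+1].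
  rewrite /chain (_ : m.+1.*2.+1 = m.*2.+1 + 2); last by rewrite doubleS addn2.
  rewrite /mkseq iotaD map_cat; congr (_ ++ _).
  by rewrite add0n /= /chain_vertex /= odd_double /= uphalf_double subn2 subn1.
rewrite foldl_cat; move: (foldl F [::] (chain m)) IH1 IH2 => V IH1 IH2.
rewrite (_ : iota 0 m.+2 = iota 0 m.+1 ++ [:: m.+1]); last by rewrite -addn1 iotaD.
rewrite all_cat -IH2 [foldl _ _ _]/= /F /= !size_rcons IH1 last_rcons; split=> //.
by rewrite !nth_rcons IH1 ltnSn ltnn eqxx -nth_last IH1 /= andbT.
Qed.

Lemma chain_wf m : wf_circuit m.+1 (chain m).
Proof.
rewrite /wf_circuit size_mkseq; split=> //; split.
- move=> i i_lt; rewrite nth_mkseq // /chain_vertex.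
  case: eqP => [_ //|i_ne0].
  have := odd_double_half i; rewrite -!muln2 in i_lt *.
  case: (odd i) => /= i_eq; [lia|].
  rewrite !ltn_subLR; lia.
- move=> i i_lt; rewrite /= -!muln2 in i_lt.
  have := odd_double_half i; rewrite -!muln2.
  case i_odd: (odd i) => /= i_eq; [exists i.+1 | exists i.+2];
    (split; first lia); rewrite nth_mkseq -?muln2; try lia;
    rewrite /chain_vertex /= i_odd /= !inE; apply/orP; [right|left]; apply/eqP; lia.
Qed.

Lemma chain_computes m : circuit_computes (chain m) (and_fun m.+1).
Proof.
move=> x; rewrite ffunE /eval_circuit (chain_eval x m).2.
by rewrite -{2}(mkseq_nth false x) size_tuple /mkseq all_map.
Qed.

Lemma and_circ_compl n : 0 < n ->
  exists k, circ_compl (and_fun n) = Some k /\ n * trunc_log 2 n <= k.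
Proof.
case: n => // m _.
have [k [C [-> [CfC ->]]]] := circ_compl_attained _ _ _ (chain_wf m) (chain_computes m).
by exists (Lenc (size C) m.+1); split; last apply/Lenc_lower/and_circuit_size.
Qed.

Theorem mainTheorem12 (c : nat) (hc : 1 < c) (U : interpreter)
  (HU : universal_property c U) :
  exists K : nat, 0 < K /\
  exists N : nat, forall n : nat, N <= n ->
    exists (f : H n) (u k : nat),
      desc_compl U f = Some u /\ circ_compl f = Some k /\
      n * trunc_log 2 n * u <= K * k.
Proof.
have [h [N0 hU]] := HU 1 hc and_TM (fun x => all id x) and_TM_wf
  (ex_intro _ 1 and_TM_computes).
exists (size h).+1; split=> //; exists (maxn N0 1) => n n_ge.
have [|u [Hu u_le]] := @desc_compl_le U n (and_fun n) h.
  by move=> x; rewrite ffunE; apply: hU; rewrite size_tuple; lia.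
have [|k [Hk k_ge]] := @and_circ_compl n; first lia.
exists (and_fun n), u, k; split=> //; split=> //.
by rewrite mulnC; apply: leq_mul; [lia | apply: leq_trans k_ge _].
Qed.
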